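(* Let $(X,d)$ and $(Y,d')$ be separable metric spaces with computable structures $\mathcal I$ and $\mathcal J$, and let $T:X\to X$, $T':Y\to Y$ be continuous maps. Let $f:X\to Y$ be surjective and a morphism from $(X,d,\mathcal I)$ to $(Y,d',\mathcal J)$ with $f\circ T=T'\circ f$. Then for every $x\in X$, with $y=f(x)$, $I\in\mathcal I$, $J\in\mathcal J$, $$\mathcal E^I(x)\ge\mathcal E^J(y),$$ where the left side is the orbit complexity of $x$ under $T$ and the right side that of $y$ under $T'$.
   Context: $\Sigma=\{0,1\}^*$; a universal Turing machine $\mathcal U$ is fixed (partial recursive $\Sigma\to\Sigma$). An interpretation $I:\Sigma\to X$ has dense image; computable if there is a total recursive $D$ with $|d(I(s_1),I(s_2))-D(s_1,s_2,n)|\le2^{-n}$; two computable interpretations are equivalent if there is a total recursive $D^*$ with $|d(I_1(s_1),I_2(s_2))-D^*(s_1,s_2,n)|\le2^{-n}$; a computable structure is an equivalence class. A morphism $\Psi:(X,d,\mathcal I)\to(Y,d',\mathcal J)$ is a uniformly continuous map such that for every $I\in\mathcal I$, $J\in\mathcal J$ there is a total recursive $D^*:\Sigma\times\Sigma\times\mathbb N\to\mathbb Q$ with $|d'(\Psi(I(s_1)),J(s_2))-D^*(s_1,s_2,n)|\le2^{-n}$. Fix a total recursive surjection $\mathcal Q:\Sigma\to\Sigma^*$ onto finite sequences of strings; $U(p)=I(\mathcal Q(\mathcal U(p)))$, $i$-th entry $U_i(p)$. For a map $T$: $\mathcal E^I(x,n,\epsilon)=\min\{|p|: U(p)\in X^{n+1},\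 \max_{0\le i\le n}d(U_i(p),T^i(x))<\epsilon\}$. Hyperreals: $\mathbb R^*$ an ordered field containing $\mathbb R$ with a surjective ring homomorphism $J:\mathbb R^{\mathbb N}\to\mathbb R^*$ such that if $a\in\mathbb R$ and $\exists k\ge1$ with $\phi_{kn}\ge a$ for all $n\ge1$ then $J(\phi)\ge a$; for nonzero $a,b$, $a\simeq b$ iff $a/b,b/a$ bounded; $[a]$ the class; $[a]\le[b]$ iff for all $x\in[a],y\in[b]$, $x\simeq y$ or $x<y$. $\mathcal R$: $\approx$-classes of monotone sequences in $\mathbb R^*/{\simeq}$ ($(a_i)<(b_j)$ iff $\exists M$ with $a_n<b_m$ for all $n,m>M$; $\approx$ iff neither $<$), totally ordered, containing $\mathbb R^*/{\simeq}$ as constant sequences, with sups/infs of monotone sequences. $\mathcal E^I(x,\epsilon)=[J((\mathcal E^I(x,n,\epsilon))_n)]$, $\mathcal E^I(x)=\sup_{\epsilon>0}\mathcal E^I(x,\epsilon)$. *)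

From HB Require Import structures.
From mathcomp Require Import all_boot all_order all_algebra.
From mathcomp Require Import boolp classical_sets reals.
Set Implicit Arguments.
Unset Strict Implicit.
Unset Printing Implicit Defensive.
Import Order.TTheory GRing.Theory Num.Theory.

Inductive code : Type :=
| CZero
| CSucc
| CProj of nat
| CComp of code & list code
| CPrec of code & code
| CMu of code.

Inductive ev : code -> seq nat -> nat -> Prop :=
| evZero v : ev CZero v 0
| evSucc x v : ev CSucc (x :: v) x.+1
| evProj i v : (i < size v)%N -> ev (CProj i) v (nth 0%N v i)
| evComp f gs v ws y : evs gs v ws -> ev f ws y -> ev (CComp f gs) v y
| evPrec0 f g v y : ev f v y -> ev (CPrec f g) (0%N :: v) y
| evPrecS f g n v r y :
    ev (CPrec f g) (n :: v) r -> ev g (n :: r :: v) y ->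
    ev (CPrec f g) (n.+1 :: v) y
| evMu f v n :
    ev f (n :: v) 0 ->
    (forall m, (m < n)%N -> exists k, ev f (m :: v) k.+1) ->
    ev (CMu f) v n
with evs : list code -> seq nat -> seq nat -> Prop :=
| evsNil v : evs [::] v [::]
| evsCons g gs v w ws : ev g v w -> evs gs v ws -> evs (g :: gs) v (w :: ws).

(* Sigma = {0,1}^* is  seq bool ; bijective coding of Sigma into nat *)
Definition Sigma := seq bool.

Fixpoint enc_bits (s : Sigma) : nat :=
  match s with
  | [::] => 0%N
  | b :: s' => ((enc_bits s').*2 + 1 + b)%N
  end.

(* Cantor pairing and a bijective coding of finite sequences of nat *)
Definition cpair (a b : nat) : nat := (((a + b) * (a + b).+1)./2 + b)%N.

Fixpoint enc_list (l : seq nat) : nat :=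
  match l with
  | [::] => 0%N
  | a :: l' => (cpair a (enc_list l')).+1
  end.

Definition enc_seqs (l : seq Sigma) : nat := enc_list (map enc_bits l).

(* zig-zag decoding nat -> int *)
Definition int_of_nat (a : nat) : int :=
  if odd a then (- ((a.+1)./2)%:Z)%R else ((a./2)%:Z)%R.

Definition partrec (phi : Sigma -> option Sigma) : Prop :=
  exists c : code, forall s t : Sigma,
    phi s = Some t <-> ev c [:: enc_bits s] (enc_bits t).

Definition totrec_seqs (F : Sigma -> seq Sigma) : Prop :=
  exists c : code, forall s : Sigma, ev c [:: enc_bits s] (enc_seqs (F s)).

Definition totrec3 (D : Sigma -> Sigma -> nat -> rat) : Prop :=
  exists cn cd : code, forall (s1 s2 : Sigma) (n : nat),
    exists a b : nat,
      ev cn [:: enc_bits s1; enc_bits s2; n] a /\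
      ev cd [:: enc_bits s1; enc_bits s2; n] b /\
      D s1 s2 n = ((int_of_nat a)%:~R / (b.+1)%:R)%R.

Definition universal_machine (UU : Sigma -> option Sigma) : Prop :=
  partrec UU /\
  forall phi, partrec phi ->
    exists c : nat, forall p s, phi p = Some s ->
      exists p', UU p' = Some s /\ (size p' <= c * size p + c)%N.

Local Open Scope ring_scope.

Section Metric.
Variable R : realType.

Definition is_metric (X : Type) (d : X -> X -> R) : Prop :=
  [/\ forall x y, d x y = 0 <-> x = y,
      forall x y, d x y = d y x &
      forall x y z, d x z <= d x y + d y z].

Definition separable (X : Type) (d : X -> X -> R) : Prop :=
  exists S : nat -> X, forall x (e : R), 0 < e -> exists k, d (S k) x < e.

Definition metric_continuous (X : Type) (d : X -> X -> R) (T : X -> X) :=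
  forall x (e : R), 0 < e -> exists2 del : R, 0 < del &
    forall y, d x y < del -> d (T x) (T y) < e.

Definition unif_continuous (X Y : Type) (d : X -> X -> R) (d' : Y -> Y -> R)
  (f : X -> Y) :=
  forall e : R, 0 < e -> exists2 del : R, 0 < del &
    forall x y, d x y < del -> d' (f x) (f y) < e.

Definition interpretation (X : Type) (d : X -> X -> R) (I : Sigma -> X) :=
  forall x (e : R), 0 < e -> exists s, d (I s) x < e.

Definition comp_interp (X : Type) (d : X -> X -> R) (I : Sigma -> X) :=
  interpretation d I /\
  exists D, totrec3 D /\ forall s1 s2 n,
    `|d (I s1) (I s2) - ratr (D s1 s2 n)| <= 2%:R ^- n.

Definition equiv_interp (X : Type) (d : X -> X -> R) (I1 I2 : Sigma -> X) :=
  exists D, totrec3 D /\ forall s1 s2 n,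
    `|d (I1 s1) (I2 s2) - ratr (D s1 s2 n)| <= 2%:R ^- n.

(* a computable structure = an equivalence class of computable
   interpretations, given as a predicate on interpretations *)
Definition comp_structure (X : Type) (d : X -> X -> R)
  (CI : (Sigma -> X) -> Prop) : Prop :=
  [/\ exists I, CI I,
      forall I, CI I -> comp_interp d I,
      forall I1 I2, CI I1 -> CI I2 -> equiv_interp d I1 I2 &
      forall I1 I2, CI I1 -> comp_interp d I2 -> equiv_interp d I1 I2 -> CI I2].

Definition morphism (X Y : Type) (d : X -> X -> R) (d' : Y -> Y -> R)
  (CI : (Sigma -> X) -> Prop) (CJ : (Sigma -> Y) -> Prop) (f : X -> Y) :=
  unif_continuous d d' f /\
  forall I J, CI I -> CJ J ->
    exists D, totrec3 D /\ forall s1 s2 n,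
      `|d' (f (I s1)) (J s2) - ratr (D s1 s2 n)| <= 2%:R ^- n.

Definition orbit_prog (X : Type) (d : X -> X -> R) (UU : Sigma -> option Sigma)
  (Q : Sigma -> seq Sigma) (I : Sigma -> X) (T : X -> X) (x : X)
  (n : nat) (eps : R) (p : Sigma) : Prop :=
  exists s, UU p = Some s /\ size (Q s) = n.+1 /\
    forall i, (i <= n)%N -> d (I (nth [::] (Q s) i)) (iter i T x) < eps.

Definition orbit_cx (X : Type) (d : X -> X -> R) (UU : Sigma -> option Sigma)
  (Q : Sigma -> seq Sigma) (I : Sigma -> X) (T : X -> X) (x : X)
  (n : nat) (eps : R) : nat :=
  xget 0%N (fun m : nat =>
    (exists p, orbit_prog d UU Q I T x n eps p /\ size p = m) /\
    forall p, orbit_prog d UU Q I T x n eps p -> (m <= size p)%N).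

Definition hyperreal (Rs : realFieldType) (J : (nat -> R) -> Rs) : Prop :=
  [/\ forall phi psi, J (fun n => phi n + psi n) = J phi + J psi,
      forall phi psi, J (fun n => phi n * psi n) = J phi * J psi,
      J (fun _ => 1) = 1,
      forall y, exists phi, J phi = y &
      forall (a : R) (phi : nat -> R),
        (exists k, (1 <= k)%N /\ forall n, (1 <= n)%N -> a <= phi (k * n)%N) ->
        J (fun _ => a) <= J phi].

Section Hyper.
Variables (Rs : realFieldType) (J : (nat -> R) -> Rs).

Definition hbounded (z : Rs) : Prop := exists r : R, `|z| <= J (fun _ => r).

Definition hsim (a b : Rs) : Prop :=
  [/\ a != 0, b != 0, hbounded (a / b) & hbounded (b / a)].

Definition cls_le (a b : Rs) : Prop :=
  forall x y, hsim x a -> hsim y b -> hsim x y \/ x < y.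
Definition cls_lt (a b : Rs) : Prop := cls_le a b /\ ~ hsim a b.

(* order of R-calligraphic on (representatives of) monotone sequences *)
Definition rseq_lt (a b : nat -> Rs) : Prop :=
  exists M, forall n m, (M < n)%N -> (M < m)%N -> cls_lt (a n) (b m).

Definition rseq_ge (a b : nat -> Rs) : Prop :=
  rseq_lt b a \/ (~ rseq_lt a b /\ ~ rseq_lt b a).

Definition orbit_cx_eps (X : Type) (d : X -> X -> R)
  (UU : Sigma -> option Sigma) (Q : Sigma -> seq Sigma) (I : Sigma -> X)
  (T : X -> X) (x : X) (eps : R) : Rs :=
  J (fun n => (orbit_cx d UU Q I T x n eps)%:R).

(* E^I(x) = sup_{eps>0} E^I(x,eps): since eps |-> E^I(x,eps) is monotone,
   it is the element of R-calligraphic given by the monotone sequence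
   k |-> E^I(x, 1/(k+1)) *)
Definition orbit_cx_seq (X : Type) (d : X -> X -> R)
  (UU : Sigma -> option Sigma) (Q : Sigma -> seq Sigma) (I : Sigma -> X)
  (T : X -> X) (x : X) : nat -> Rs :=
  fun k => orbit_cx_eps d UU Q I T x ((k.+1)%:R)^-1.

End Hyper.
End Metric.

(* A program for the universal machine that describes the first n+1 points of
   the T-orbit of x up to precision delta (a list of names s_i with I(s_i)
   close to T^i x) is turned into one describing the T'-orbit of f x up to
   precision eps: run it, then replace every name s by the first name t in a
   fixed enumeration for which the computable approximation of d'(f(I s), J t)
   is small.  As f is uniformly continuous and commutes with the dynamics, the
   new names are eps-close to T'^i (f x).  The post-processing is total
   recursive, so universality bounds the length of the new program by
   c * (old length) + c; hence E^J(f x, n, eps) <= c E^I(x, n, delta) + c for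
   all n.  Both hyperreals are >= 1, so b <= c a + c <= (2c+1) a, and a
   class [b] within a bounded multiple of [a] cannot lie strictly above [a];
   this excludes E^I(x) < E^J(f x). *)

From HB Require Import structures.
From mathcomp Require Import all_boot all_order all_algebra.
From mathcomp Require Import boolp classical_sets reals.
From mathcomp Require Import zify ring lra.

Set Implicit Arguments.
Unset Strict Implicit.
Unset Printing Implicit Defensive.
Import Order.TTheory GRing.Theory Num.Theory.

(** * Partial recursive functions *)

Fixpoint ev_det c v y1 (H1 : ev c v y1) {struct H1} : forall y2, ev c v y2 -> y1 = y2
with evs_det gs v w1 (H1 : evs gs v w1) {struct H1} : forall w2, evs gs v w2 -> w1 = w2.
Proof.
- destruct H1 as [v|x v|i v Hi|f gs v ws y Hs Hf|f g v y Hf|f g n v r y Hr Hg|f v n Hf Hlt];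
    intros y2 H2; inversion H2; subst; auto.
  + match goal with H : evs gs v ?w |- _ => have E := evs_det _ _ _ Hs _ H end; subst.
    match goal with H : ev f _ y2 |- _ => exact: ev_det _ _ _ Hf _ H end.
  + match goal with H : ev f _ y2 |- _ => exact: ev_det _ _ _ Hf _ H end.
  + match goal with H : ev (CPrec f g) _ ?w |- _ => have E := ev_det _ _ _ Hr _ H end; subst.
    match goal with H : ev g _ y2 |- _ => exact: ev_det _ _ _ Hg _ H end.
  + match goal with H : ev f _ 0, H' : forall m, _ |- _ =>
      rename H into Hf2; rename H' into Hlt2 end.
    case: (ltngtP n y2) => // hlt.
    * by case: (Hlt2 _ hlt) => k /(ev_det _ _ _ Hf).
    * by case: (Hlt _ hlt) => k /ev_det /(_ _ Hf2).
- destruct H1 as [v|g gs v w ws Hg Hs]; intros w2 H2; inversion H2; subst; auto.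
  match goal with H : ev g v _ |- _ => have E1 := ev_det _ _ _ Hg _ H end.
  match goal with H : evs gs v _ |- _ => have E2 := evs_det _ _ _ Hs _ H end.
  by subst.
Qed.

Definition computable k (F : seq nat -> nat) :=
  exists c, forall v, size v = k -> ev c v (F v).

Definition computable1 f := computable 1 (fun v => f (nth 0 v 0)).
Definition computable2 f := computable 2 (fun v => f (nth 0 v 0) (nth 0 v 1)).
Definition computable3 f := computable 3 (fun v => f (nth 0 v 0) (nth 0 v 1) (nth 0 v 2)).

Lemma computable_ext k F G :
  computable k F -> (forall v, size v = k -> F v = G v) -> computable k G.
Proof. by case=> c Hc FG; exists c => v Hv; rewrite -FG //; apply: Hc. Qed.

Lemma computable1_ext f g : computable1 f -> f =1 g -> computable1 g.
Proof. by move=> Hf fg; apply: computable_ext Hf _ => v _; rewrite fg. Qed.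

Lemma computable2_ext f g : computable2 f -> f =2 g -> computable2 g.
Proof. by move=> Hf fg; apply: computable_ext Hf _ => v _; rewrite fg. Qed.

Lemma computable_proj k i : (i < k)%N -> computable k (fun v => nth 0 v i).
Proof. by move=> hi; exists (CProj i) => v Hv; constructor; rewrite Hv. Qed.

Lemma computable_arg0 k : computable k.+1 (fun v => nth 0 v 0).
Proof. exact: computable_proj. Qed.
Lemma computable_arg1 k : computable k.+2 (fun v => nth 0 v 1).
Proof. exact: computable_proj. Qed.
Lemma computable_arg2 k : computable k.+3 (fun v => nth 0 v 2).
Proof. exact: computable_proj. Qed.

Fixpoint all_computable k (Gs : seq (seq nat -> nat)) : Prop :=
  if Gs is G :: Gs' then computable k G /\ all_computable k Gs' else True.

Lemma all_computable_codes k Gs : all_computable k Gs ->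
  exists cs, forall v, size v = k -> evs cs v (map (fun G => G v) Gs).
Proof.
elim: Gs => [|G Gs IH] /=; first by exists [::] => v _; constructor.
case=> [[c Hc] /IH [cs Hcs]]; exists (c :: cs) => v Hv; constructor; auto.
Qed.

Lemma computable_comp k m F Gs : computable m F -> size Gs = m ->
  all_computable k Gs -> computable k (fun v => F (map (fun G => G v) Gs)).
Proof.
case=> c Hc Hs /all_computable_codes [cs Hcs]; exists (CComp c cs) => v Hv.
by econstructor; [exact: Hcs | apply: Hc; rewrite size_map].
Qed.

Lemma computable1_comp k f G :
  computable1 f -> computable k G -> computable k (fun v => f (G v)).
Proof. by move=> Hf HG; apply: (computable_comp (Gs := [:: G]) Hf). Qed.

Lemma computable2_comp k f G1 G2 : computable2 f ->
  computable k G1 -> computable k G2 -> computable k (fun v => f (G1 v) (G2 v)).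
Proof. by move=> Hf H1 H2; apply: (computable_comp (Gs := [:: G1; G2]) Hf). Qed.

Lemma computable3_comp k f G1 G2 G3 : computable3 f ->
  computable k G1 -> computable k G2 -> computable k G3 ->
  computable k (fun v => f (G1 v) (G2 v) (G3 v)).
Proof. by move=> Hf H1 H2 H3; apply: (computable_comp (Gs := [:: G1; G2; G3]) Hf). Qed.

Lemma computable1_id : computable1 id.
Proof. exact: computable_proj. Qed.

Lemma computable1_succ : computable1 S.
Proof. by exists CSucc => [[|x v]] //= _; constructor. Qed.

Lemma computable_const k c : computable k (fun _ => c).
Proof.
elim: c => [|c IH]; first by exists CZero => v _; constructor.
exact: computable1_comp computable1_succ IH.
Qed.

Lemma computable1_of2 f c : computable2 f -> computable1 (fun x => f x c).
Proof. by move=> Hf; apply: computable2_comp Hf (computable_arg0 _) (computable_const _ _). Qed.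

Definition prim_rec (b : nat -> nat) (s : nat -> nat -> nat -> nat) n x :=
  nat_rect (fun _ => nat) (b x) (fun i r => s i r x) n.

Lemma computable2_prim_rec b s :
  computable1 b -> computable3 s -> computable2 (prim_rec b s).
Proof.
case=> cb Hb [cs Hs]; exists (CPrec cb cs) => [[|n [|x [|? ?]]]] //= _.
elim: n => [|n IH] /=; first by constructor; apply: (Hb [:: x]).
by econstructor; [exact: IH | apply: (Hs [:: n; _; x])].
Qed.

Definition least_zero (g : nat -> nat) : nat :=
  xget 0%N (fun n => g n = 0%N /\ forall m, (m < n)%N -> g m <> 0%N).

Lemma least_zeroP g : (exists n, g n = 0%N) ->
  g (least_zero g) = 0%N /\ forall m, (m < least_zero g)%N -> g m <> 0%N.
Proof.
move=> [n Hn].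
apply: (xgetPex 0%N (P := fun n => g n = 0%N /\ forall m, (m < n)%N -> g m <> 0%N)).
have ex : exists n, g n == 0%N by exists n; apply/eqP.
exists (ex_minn ex); case: ex_minnP => m /eqP Hm Hmin; split => // k hk /eqP /Hmin.
by rewrite leqNgt hk.
Qed.

Lemma computable1_least_zero t : computable2 t -> (forall x, exists n, t n x = 0%N) ->
  computable1 (fun x => least_zero (fun n => t n x)).
Proof.
case=> c Hc Hex; exists (CMu c) => [[|x [|? ?]]] //= _.
have [H0 Hlt] := least_zeroP (Hex x).
constructor; first by rewrite -H0; apply: (Hc [:: _; x]).
move=> m hm; have := Hlt m hm; case E: (t m x) => [//|k] _.
by exists k; rewrite -E; apply: (Hc [:: m; x]).
Qed.

Lemma computable2_add : computable2 addn.
Proof.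
apply: computable2_ext (computable2_prim_rec (s := fun i r x => r.+1) computable1_id _) _.
  exact: computable1_comp computable1_succ (computable_arg1 _).
by move=> n x; elim: n => //= n ->.
Qed.

Lemma computable2_mul : computable2 muln.
Proof.
have Hs : computable3 (fun i r x => r + x)%N.
  exact: computable2_comp computable2_add (computable_arg1 _) (computable_arg2 _).
apply: computable2_ext (computable2_prim_rec (b := fun _ => 0%N) (computable_const _ _) Hs) _.
by move=> n x; elim: n => //= n ->; rewrite mulSn addnC.
Qed.

Lemma computable1_pred : computable1 predn.
Proof.
have H := computable2_prim_rec (b := fun _ => 0%N) (s := fun i r x => i)
  (computable_const _ _) (computable_arg0 _).
by apply: computable1_ext (computable1_of2 0%N H) _; case.
Qed.

Lemma computable2_sub : computable2 subn.
Proof.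
have Hs : computable3 (fun i r x => r.-1).
  exact: computable1_comp computable1_pred (computable_arg1 _).
have H := computable2_prim_rec computable1_id Hs.
have Hswap : computable2 (fun m n => prim_rec id (fun i r x => r.-1) n m).
  exact: computable2_comp H (computable_arg1 _) (computable_arg0 _).
apply: computable2_ext Hswap _ => m; elim=> [|n IH]; first by rewrite subn0.
by rewrite subnS -IH.
Qed.

Lemma computable1_odd : computable1 (fun n => nat_of_bool (odd n)).
Proof.
have Hs : computable3 (fun i r x => 1 - r)%N.
  exact: computable2_comp computable2_sub (computable_const _ _) (computable_arg1 _).
have H := computable2_prim_rec (b := fun _ => 0%N) (computable_const _ _) Hs.
by apply: computable1_ext (computable1_of2 0%N H) _; elim=> //= n ->; case: (odd n).
Qed.

Lemma computable1_half : computable1 half.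
Proof.
have Hs : computable3 (fun i r x => r + odd i)%N.
  apply: computable2_comp computable2_add (computable_arg1 _) _.
  exact: computable1_comp computable1_odd (computable_arg0 _).
have H := computable2_prim_rec (b := fun _ => 0%N) (computable_const _ _) Hs.
apply: computable1_ext (computable1_of2 0%N H) _.
by elim=> //= n ->; rewrite uphalf_half addnC.
Qed.

(** * Coding of pairs, lists and strings *)

Definition tri w := (w * w.+1)./2.

Lemma computable1_tri : computable1 tri.
Proof.
apply: computable1_comp computable1_half _.
apply: computable2_comp computable2_mul (computable_arg0 _) _.
exact: computable1_comp computable1_succ (computable_arg0 _).
Qed.

Lemma computable2_cpair : computable2 cpair.
Proof.
apply: computable2_comp computable2_add _ (computable_arg1 _).
exact: computable1_comp computable1_tri
  (computable2_comp computable2_add (computable_arg0 _) (computable_arg1 _)).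
Qed.

Lemma triS w : tri w.+1 = (tri w + w.+1)%N.
Proof.
rewrite /tri.
have -> : (w.+1 * w.+2 = w * w.+1 + (w.+1).*2)%N by rewrite -mul2n; lia.
by rewrite halfD odd_double andbF add0n doubleK.
Qed.

Lemma leq_tri a b : (a <= b)%N -> (tri a <= tri b)%N.
Proof.
elim: b => [|b IH]; first by rewrite leqn0 => /eqP ->.
by rewrite leq_eqVlt ltnS => /orP [/eqP -> // | /IH]; rewrite triS; lia.
Qed.

Lemma leq_self_tri w : (w <= tri w)%N.
Proof. by elim: w => // w IH; rewrite triS; lia. Qed.

(* [cdiag z] is the index of the Cantor diagonal containing [z], i.e. the
   least [w] with [z < tri w.+1]; the test is written as a subtraction. *)
Definition cdiag z := least_zero (fun w => 1 - (tri w.+1 - z))%N.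
Definition unpair2 z := (z - tri (cdiag z))%N.
Definition unpair1 z := (cdiag z - unpair2 z)%N.

Lemma cdiag_ex z : exists w, (1 - (tri w.+1 - z))%N = 0%N.
Proof. by exists z; have := leq_self_tri z.+1; lia. Qed.

Lemma computable1_cdiag : computable1 cdiag.
Proof.
apply: computable1_least_zero cdiag_ex.
apply: computable2_comp computable2_sub (computable_const _ _) _.
apply: computable2_comp computable2_sub _ (computable_arg1 _).
exact: computable1_comp computable1_tri
  (computable1_comp computable1_succ (computable_arg0 _)).
Qed.

Lemma computable1_unpair2 : computable1 unpair2.
Proof.
apply: computable2_comp computable2_sub (computable_arg0 _) _.
exact: computable1_comp computable1_tri
  (computable1_comp computable1_cdiag (computable_arg0 _)).
Qed.

Lemma computable1_unpair1 : computable1 unpair1.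
Proof.
exact: computable2_comp computable2_sub
  (computable1_comp computable1_cdiag (computable_arg0 _))
  (computable1_comp computable1_unpair2 (computable_arg0 _)).
Qed.

Lemma cdiag_cpair a b : cdiag (cpair a b) = (a + b)%N.
Proof.
have [H0 Hlt] := least_zeroP (cdiag_ex (cpair a b)).
have cp : cpair a b = (tri (a + b) + b)%N by [].
rewrite -/(cdiag _) in H0 Hlt.
case: (ltngtP (cdiag (cpair a b)) (a + b)) => // h.
- by move: H0; have := leq_tri h; rewrite cp; lia.
- by have := Hlt _ h; rewrite triS cp; lia.
Qed.

Lemma unpair2_cpair a b : unpair2 (cpair a b) = b.
Proof. by rewrite /unpair2 cdiag_cpair /cpair -/(tri _); lia. Qed.

Lemma unpair1_cpair a b : unpair1 (cpair a b) = a.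
Proof. by rewrite /unpair1 unpair2_cpair cdiag_cpair; lia. Qed.

Lemma cpair_inj a b c d : cpair a b = cpair c d -> a = c /\ b = d.
Proof.
move=> E; have := congr1 unpair1 E; have := congr1 unpair2 E.
by rewrite !unpair1_cpair !unpair2_cpair.
Qed.

Lemma unpair2_le z : (unpair2 z <= z)%N.
Proof. by rewrite /unpair2; lia. Qed.

Definition lcons a r := (cpair a r).+1.
Definition lhead L := unpair1 L.-1.
Definition ltail L := unpair2 L.-1.
Definition ldrop k L := prim_rec id (fun i r L => ltail r) k L.
Definition lsize L := least_zero (fun k => ldrop k L).
(* Step [j] of [lmap h L] conses [h] of the [(lsize L - j.+1)]-th entry, so the
   image list is built from its last entry backwards. *)
Definition lmap (h : nat -> nat) L :=
  prim_rec (fun _ => 0%N)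
    (fun j r L => lcons (h (lhead (ldrop (lsize L - j.+1) L))) r) (lsize L) L.

Lemma computable2_lcons : computable2 lcons.
Proof. exact: computable1_comp computable1_succ computable2_cpair. Qed.

Lemma computable1_lhead : computable1 lhead.
Proof.
exact: computable1_comp computable1_unpair1
  (computable1_comp computable1_pred (computable_arg0 _)).
Qed.

Lemma computable1_ltail : computable1 ltail.
Proof.
exact: computable1_comp computable1_unpair2
  (computable1_comp computable1_pred (computable_arg0 _)).
Qed.

Lemma computable2_ldrop : computable2 ldrop.
Proof.
apply: computable2_prim_rec computable1_id _.
exact: computable1_comp computable1_ltail (computable_arg1 _).
Qed.

Lemma ldrop_le k L : (ldrop k L <= L - k)%N.
Proof.
elim: k => [|k IH] /=; first by rewrite subn0.
by rewrite -/(ldrop k L) /ltail; have := unpair2_le (ldrop k L).-1; lia.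
Qed.

Lemma lsize_ex L : exists k, ldrop k L = 0%N.
Proof. by exists L; have := ldrop_le L L; rewrite subnn leqn0 => /eqP. Qed.

Lemma computable1_lsize : computable1 lsize.
Proof. exact: computable1_least_zero computable2_ldrop lsize_ex. Qed.

Lemma computable1_lmap h : computable1 h -> computable1 (lmap h).
Proof.
move=> Hh; apply: computable2_comp _ (computable1_comp computable1_lsize (computable_arg0 _))
  (computable_arg0 _).
apply: computable2_prim_rec; first exact: computable_const.
apply: computable2_comp computable2_lcons _ (computable_arg1 _).
apply: computable1_comp Hh (computable1_comp computable1_lhead _).
apply: computable2_comp computable2_ldrop _ (computable_arg2 _).
exact: computable2_comp computable2_sub
  (computable1_comp computable1_lsize (computable_arg2 _))
  (computable1_comp computable1_succ (computable_arg0 _)).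
Qed.

Lemma ltail_enc l : ltail (enc_list l) = enc_list (behead l).
Proof. by case: l => [|a l] //=; rewrite /ltail /= unpair2_cpair. Qed.

Lemma lhead_lcons a L : lhead (lcons a L) = a.
Proof. exact: unpair1_cpair. Qed.

Lemma ldrop_enc k l : ldrop k (enc_list l) = enc_list (drop k l).
Proof.
elim: k => [|k IH]; first by rewrite drop0.
rewrite /ldrop /= -/(ldrop k _) IH ltail_enc.
by elim: l {IH} k => [|a l IHl] [|k] //=; rewrite drop0.
Qed.

Lemma lsize_enc l : lsize (enc_list l) = size l.
Proof.
have [H0 Hlt] := least_zeroP (lsize_ex (enc_list l)).
rewrite -/(lsize _) ldrop_enc in H0 Hlt.
have H1 : (size l <= lsize (enc_list l))%N.
  by rewrite -subn_eq0 -size_drop size_eq0; case: drop H0.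
apply/eqP; rewrite eqn_leq H1 andbT leqNgt; apply/negP => hl.
by apply: (Hlt _ hl); rewrite ldrop_enc drop_oversize // ltnW.
Qed.

Lemma lmap_enc h l : lmap h (enc_list l) = enc_list (map h l).
Proof.
rewrite /lmap lsize_enc.
suff -> : forall j, (j <= size l)%N ->
  prim_rec (fun _ => 0%N)
    (fun j r L => lcons (h (lhead (ldrop (lsize L - j.+1) L))) r) j (enc_list l)
  = enc_list (map h (drop (size l - j) l)) by rewrite // subnn drop0.
elim=> [|j IH] hj /=; first by rewrite subn0 drop_oversize.
rewrite IH ?(ltnW hj) // lsize_enc ldrop_enc.
rewrite (drop_nth 0%N (n := size l - j.+1)); last by lia.
have -> : (size l - j.+1).+1 = (size l - j)%N by lia.
by rewrite lhead_lcons.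
Qed.

Lemma enc_bits_inj : injective enc_bits.
Proof.
elim=> [|b s IH] [|c t] //=; try lia.
move=> E; have := congr1 odd E; rewrite !oddD !odd_double /=.
by case: b c E => [] [] // /= E _; congr (_ :: _); apply: IH; lia.
Qed.

Lemma enc_bits_surj n : exists s, enc_bits s = n.
Proof.
elim/ltn_ind: n => [[|n]] IH; first by exists [::].
have [s Hs] : exists s, enc_bits s = n./2 by apply: IH; lia.
by exists (odd n :: s) => /=; rewrite Hs; have := odd_double_half n; lia.
Qed.

Definition dec_bits (n : nat) : Sigma := xget [::] (fun s => enc_bits s = n).

Lemma dec_bitsK : cancel dec_bits enc_bits.
Proof.
by move=> n; apply: (xgetPex [::] (P := fun s => enc_bits s = n)); apply: enc_bits_surj.
Qed.

Lemma enc_bitsK : cancel enc_bits dec_bits.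
Proof. by move=> s; apply: enc_bits_inj; rewrite dec_bitsK. Qed.

Lemma enc_list_inj : injective enc_list.
Proof. by elim=> [|a l IH] [|b m] //= [] /cpair_inj [-> /IH ->]. Qed.

Lemma enc_seqs_inj : injective enc_seqs.
Proof. by move=> l m /enc_list_inj /inj_map; apply; apply: enc_bits_inj. Qed.

Local Open Scope ring_scope.

(** * Recursive functions on strings *)

Definition totrec (h : Sigma -> Sigma) := computable1 (fun n => enc_bits (h (dec_bits n))).

Lemma totrec3_computable (D : Sigma -> Sigma -> nat -> rat) : totrec3 D ->
  exists FA FB, [/\ computable3 FA, computable3 FB & forall s1 s2 n, D s1 s2 n =
    (int_of_nat (FA (enc_bits s1) (enc_bits s2) n))%:~R /
    ((FB (enc_bits s1) (enc_bits s2) n).+1)%:R].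
Proof.
move=> [cn [cd H]].
have total c x y z : (forall s1 s2 n, exists a, ev c [:: enc_bits s1; enc_bits s2; n] a) ->
    ev c [:: x; y; z] (xget 0%N (ev c [:: x; y; z])).
  move=> Hc; apply: xgetPex.
  by have := Hc (dec_bits x) (dec_bits y) z; rewrite !dec_bitsK.
have HA := total cn; have HB := total cd.
have exA s1 s2 n : exists a, ev cn [:: enc_bits s1; enc_bits s2; n] a.
  by have [a [b [Ha _]]] := H s1 s2 n; exists a.
have exB s1 s2 n : exists b, ev cd [:: enc_bits s1; enc_bits s2; n] b.
  by have [a [b [_ [Hb _]]]] := H s1 s2 n; exists b.
exists (fun x y z => xget 0%N (ev cn [:: x; y; z])),
       (fun x y z => xget 0%N (ev cd [:: x; y; z])); split.
- by exists cn => [[|? [|? [|? [|]]]]] //= _; apply: HA.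
- by exists cd => [[|? [|? [|? [|]]]]] //= _; apply: HB.
- move=> s1 s2 n; have [a [b [Ha [Hb ->]]]] := H s1 s2 n.
  by rewrite (ev_det Ha (HA _ _ _ exA)) (ev_det Hb (HB _ _ _ exB)).
Qed.

Lemma rat_code_lt_inv (a b q : nat) : (0 < q)%N ->
  ((int_of_nat a)%:~R / (b.+1)%:R < (q%:R)^-1 :> rat) <-> (odd a \/ (a./2 * q < b.+1)%N).
Proof.
move=> hq; rewrite /int_of_nat; case: (odd a) => /=.
  split=> _; [by left|].
  rewrite mulrNz -pmulrn mulNr.
  have h1 : 0 <= (uphalf a)%:R / (b.+1)%:R :> rat by rewrite divr_ge0.
  have h2 : 0 < (q%:R)^-1 :> rat by rewrite invr_gt0 ltr0n.
  by apply: le_lt_trans h2; rewrite oppr_le0.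
rewrite -pmulrn ltr_pdivrMr ?ltr0n // mulrC ltr_pdivlMr ?ltr0n // -natrM ltr_nat.
by split=> [->|[]] //; right.
Qed.

Lemma totrec_seqs_computable (Q : Sigma -> seq Sigma) : totrec_seqs Q ->
  computable1 (fun u => enc_seqs (Q (dec_bits u))).
Proof.
by move=> [c H]; exists c => [[|u [|]]] //= _; have := H (dec_bits u); rewrite dec_bitsK.
Qed.

Lemma lmap_enc_seqs (h : Sigma -> Sigma) l :
  lmap (fun n => enc_bits (h (dec_bits n))) (enc_seqs l) = enc_seqs (map h l).
Proof.
rewrite /enc_seqs lmap_enc -!map_comp; congr enc_list.
by apply: eq_map => s /=; rewrite enc_bitsK.
Qed.

Lemma totrec_map_seqs (Q : Sigma -> seq Sigma) (h : Sigma -> Sigma) :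
  totrec_seqs Q -> (forall l, exists s, Q s = l) -> totrec h ->
  exists g, totrec g /\ forall s, Q (g s) = map h (Q s).
Proof.
move=> /totrec_seqs_computable hQ hQsurj hh.
pose Qc u := enc_seqs (Q (dec_bits u)).
pose hQc u := lmap (fun n => enc_bits (h (dec_bits n))) (Qc u).
pose dist n u := ((Qc n - hQc u) + (hQc u - Qc n))%N.
have dist_ex u : exists n, dist n u = 0%N.
  have [t Ht] := hQsurj (map h (Q (dec_bits u))).
  by exists (enc_bits t); rewrite /dist /hQc /Qc enc_bitsK Ht lmap_enc_seqs !subnn.
have Hdist : computable2 dist.
  have HQc0 := computable1_comp (k := 2) hQ (computable_arg0 _).
  have HhQc1 := computable1_comp (computable1_lmap (h := fun n => enc_bits (h (dec_bits n))) hh)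
    (computable1_comp (k := 2) hQ (computable_arg1 _)).
  exact: computable2_comp computable2_add (computable2_comp computable2_sub HQc0 HhQc1)
    (computable2_comp computable2_sub HhQc1 HQc0).
exists (fun s => dec_bits (least_zero (fun n => dist n (enc_bits s)))); split.
  by apply: computable1_ext (computable1_least_zero Hdist dist_ex) _ => u; rewrite !dec_bitsK.
move=> s; have [H0 _] := least_zeroP (dist_ex (enc_bits s)).
apply: enc_seqs_inj; rewrite -lmap_enc_seqs.
by move: H0; rewrite /dist /hQc /Qc enc_bitsK; lia.
Qed.

Lemma partrec_omap (UU : Sigma -> option Sigma) g :
  partrec UU -> totrec g -> partrec (fun p => omap g (UU p)).
Proof.
case=> cU hcU [cg Hg]; exists (CComp cg [:: cU]) => s t; split.
- case E: (UU s) => [s0|] //= [<-].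
  econstructor; first by constructor; [apply/hcU; exact: E | constructor].
  by have := Hg [:: enc_bits s0] erefl; rewrite /= enc_bitsK.
- move=> H; inversion H; subst.
  match goal with Hs : evs _ _ _ |- _ => inversion Hs; subst end.
  match goal with Hs : evs [::] _ _ |- _ => inversion Hs; subst end.
  match goal with Hu : ev cU _ ?w |- _ =>
    rewrite -(dec_bitsK w) in Hu; move/hcU: Hu => -> /= end.
  match goal with Hc : ev cg [:: ?w] _ |- _ => have := ev_det Hc (Hg [:: w] erefl) end.
  by move=> /enc_bits_inj ->.
Qed.

Lemma partrec_const s0 : partrec (fun _ : Sigma => Some s0).
Proof.
have [c Hc] := computable_const 1 (enc_bits s0).
exists c => s t; split; first by move=> [<-]; apply: (Hc [:: enc_bits s]).
by move/ev_det/(_ _ (Hc [:: enc_bits s] erefl))/enc_bits_inj => ->.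
Qed.

Section MetricFacts.
Variables (R : realType) (Y : Type) (d : Y -> Y -> R).
Hypothesis hd : is_metric d.

Lemma metric_sym y z : d y z = d z y.
Proof. by case: hd. Qed.

Lemma metric_triangle y z w : d y w <= d y z + d z w.
Proof. by case: hd. Qed.

End MetricFacts.

(** * Computable approximation of a morphism *)

Section ComputableApproximation.
Variables (R : realType) (Y : Type) (d : Y -> Y -> R) (F Iy : Sigma -> Y).
Variable D : Sigma -> Sigma -> nat -> rat.
Hypotheses (hd : is_metric d) (hIy : interpretation d Iy) (hD : totrec3 D).
Hypothesis hDb : forall s1 s2 n, `|d (F s1) (Iy s2) - ratr (D s1 s2 n)| <= 2%:R ^- n.

Section FixedPrecision.
Variables (FA FB : nat -> nat -> nat -> nat).
Hypotheses (hFA : computable3 FA) (hFB : computable3 FB).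
Hypothesis hDcode : forall s1 s2 n, D s1 s2 n =
  (int_of_nat (FA (enc_bits s1) (enc_bits s2) n))%:~R /
  ((FB (enc_bits s1) (enc_bits s2) n).+1)%:R.
Variable q : nat.
Hypothesis q_gt0 : (0 < q)%N.

Definition close_test t e :=
  let a := FA e t (2 * q)%N in let b := FB e t (2 * q)%N in
  ((1 - odd a) * (1 - (b.+1 - a./2 * q)))%N.

Lemma computable2_close_test : computable2 close_test.
Proof.
have HA := computable3_comp (k := 2) hFA
  (computable_arg1 _) (computable_arg0 _) (computable_const _ (2 * q)).
have HB := computable3_comp (k := 2) hFB
  (computable_arg1 _) (computable_arg0 _) (computable_const _ (2 * q)).
rewrite /computable2 /close_test.
apply: computable2_comp computable2_mul _ _.
  exact: computable2_comp computable2_sub (computable_const _ _)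
    (computable1_comp computable1_odd HA).
apply: computable2_comp computable2_sub (computable_const _ _) _.
apply: computable2_comp computable2_sub (computable1_comp computable1_succ HB) _.
exact: computable2_comp computable2_mul
  (computable1_comp computable1_half HA) (computable_const _ _).
Qed.

Lemma close_test0 t e :
  close_test t e = 0%N <-> ratr (D (dec_bits e) (dec_bits t) (2 * q)) < (q%:R)^-1 :> R.
Proof.
rewrite -(ratr_nat R q) -fmorphV ltr_rat hDcode !dec_bitsK rat_code_lt_inv // /close_test.
case: (odd _) => /=; first by split=> // _; left.
by rewrite mul1n; split; [move=> H; right | case]; lia.
Qed.

Let pow2_inv_le : 2%:R ^- (2 * q) <= (q%:R)^-1 / 2 :> R.
Proof.
rewrite -invfM -natrM mulnC lef_pV2 ?posrE ?exprn_gt0 ?ltr0n ?muln_gt0 ?q_gt0 //.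
by rewrite -natrX ler_nat ltnW // ltn_expl.
Qed.

Lemma close_test_ex e : exists t, close_test t e = 0%N.
Proof.
have hq : 0 < (q%:R)^-1 :> R by rewrite invr_gt0 ltr0n.
have [t Ht] := hIy (F (dec_bits e)) (e := (q%:R)^-1 / 2) ltac:(lra).
exists (enc_bits t); apply/close_test0; rewrite enc_bitsK.
have := hDb (dec_bits e) t (2 * q); rewrite ler_norml => /andP [h1 h2].
by move: Ht; rewrite metric_sym //; have := pow2_inv_le; lra.
Qed.

Definition approx_code e := least_zero (fun t => close_test t e).

Lemma computable1_approx_code : computable1 approx_code.
Proof. exact: computable1_least_zero computable2_close_test close_test_ex. Qed.

Lemma approx_code_close s : d (F s) (Iy (dec_bits (approx_code (enc_bits s)))) < 2 / q%:R.
Proof.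
have hq : 0 < (q%:R)^-1 :> R by rewrite invr_gt0 ltr0n.
have [/close_test0 H _] := least_zeroP (close_test_ex (enc_bits s)).
move: H; rewrite -/(approx_code _) enc_bitsK.
have := hDb s (dec_bits (approx_code (enc_bits s))) (2 * q).
by rewrite ler_norml => /andP [h1 h2]; have := pow2_inv_le; lra.
Qed.

End FixedPrecision.

Lemma totrec_approx e : 0 < e -> exists h, totrec h /\ forall s, d (F s) (Iy (h s)) < e.
Proof.
have [FA [FB [hFA hFB hDcode]]] := totrec3_computable hD.
move=> he; pose q := (Num.Def.archi_bound (2 / e)).+1.
exists (fun s => dec_bits (approx_code FA FB q (enc_bits s))); split.
  apply: computable1_ext (computable1_approx_code hFA hFB hDcode (ltn0Sn _)) _.
  by move=> n; rewrite !dec_bitsK.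
move=> s; apply: lt_le_trans (approx_code_close hDcode (ltn0Sn _) s) _.
have h2e : 2 / e < q%:R.
  by apply: lt_trans (archi_boundP _) _; rewrite ?ltr_nat ?divr_ge0 ?ltW.
rewrite ler_pdivrMr ?ltr0n // mulrC -ler_pdivrMr //; exact: ltW.
Qed.

End ComputableApproximation.

(** * Hyperreals *)

Section Hyperreals.
Variables (R : realType) (Rs : realFieldType) (J : (nat -> R) -> Rs).
Hypothesis hJ : hyperreal J.

Lemma hyper_add phi psi : J (fun n => phi n + psi n) = J phi + J psi.
Proof. by case: hJ. Qed.

Lemma hyper_mul phi psi : J (fun n => phi n * psi n) = J phi * J psi.
Proof. by case: hJ. Qed.

Lemma hyper_one : J (fun _ => 1) = 1.
Proof. by case: hJ. Qed.

Lemma hyper_ge_const (a : R) phi :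
  (exists k, (1 <= k)%N /\ forall n, (1 <= n)%N -> a <= phi (k * n)%N) ->
  J (fun _ => a) <= J phi.
Proof. by case: hJ => _ _ _ _; apply. Qed.

Lemma hyper_zero : J (fun _ => 0) = 0.
Proof.
have := hyper_add (fun _ => 0) (fun _ => 0).
rewrite (_ : (fun _ => 0 + 0) = (fun _ => 0)); last by apply: funext => ?; rewrite addr0.
by move=> h; lra.
Qed.

Lemma hyper_nat n : J (fun _ => n%:R) = n%:R.
Proof.
elim: n => [|n IH]; first exact: hyper_zero.
rewrite (_ : (fun _ => n.+1%:R) = (fun k => (fun _ => n%:R) k + (fun _ => 1) k)).
  by rewrite hyper_add IH hyper_one -natr1.
by apply: funext => ?; rewrite /= -natr1.
Qed.

Lemma hyper_le phi psi : (forall k, phi k <= psi k) -> J phi <= J psi.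
Proof.
move=> H; have -> : psi = (fun k => (fun k => psi k - phi k) k + phi k).
  by apply: funext => k /=; rewrite subrK.
rewrite hyper_add lerDr -hyper_zero; apply: hyper_ge_const.
by exists 1%N; split=> // n _; rewrite subr_ge0.
Qed.

Lemma hyper_affine_le (a b : nat -> nat) (c : nat) : (forall k, b k <= c * a k + c)%N ->
  J (fun k => (b k)%:R) <= c%:R * J (fun k => (a k)%:R) + c%:R.
Proof.
move=> H; rewrite -!hyper_nat -hyper_mul -hyper_add; apply: hyper_le => k.
by rewrite -natrM -natrD ler_nat.
Qed.

(* A natural sequence vanishing at most once is eventually positive along
   every sequence [k * n], which is what the hyperreal order sees. *)
Lemma hyper_ge1 (c : nat -> nat) :
  (forall k1 k2, c k1 = 0%N -> c k2 = 0%N -> k1 = k2) -> 1 <= J (fun k => (c k)%:R).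
Proof.
move=> H; rewrite -hyper_one; apply: hyper_ge_const.
case: (pselect (exists k0, c k0 = 0%N)) => [[k0 Hk0]|Hn].
- exists k0.+1; split=> // n hn; rewrite ler1n lt0n; apply/negP => /eqP h.
  by have := H _ _ h Hk0; nia.
- exists 1%N; split=> // n _; rewrite ler1n lt0n; apply/negP => /eqP h.
  by apply: Hn; exists (1 * n)%N.
Qed.

Lemma hsim_refl z : 0 < z -> hsim J z z.
Proof.
by move=> z0; split; rewrite ?gt_eqF //; exists 1; rewrite hyper_one divff ?gt_eqF // normr1.
Qed.

Lemma hsim_mulnl (K : nat) a : (0 < K)%N -> 0 < a -> hsim J (K%:R * a) a.
Proof.
move=> hK a0; have K1 : 1 <= K%:R :> Rs by rewrite ler1n.
split; rewrite ?gt_eqF ?mulr_gt0 //; try lra.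
- by exists K%:R; rewrite hyper_nat mulfK ?gt_eqF // ger0_norm //; lra.
- exists 1; rewrite hyper_one invfM mulrCA mulfV ?gt_eqF // mulr1 ger0_norm.
    by rewrite invf_le1 //; lra.
  by rewrite invr_ge0; lra.
Qed.

Lemma not_cls_lt_le_mul (a b : Rs) (K : nat) : (0 < K)%N -> 0 < a -> 0 < b ->
  b <= K%:R * a -> ~ cls_lt J a b.
Proof.
move=> hK a0 b0 hba [Hle Hnsim]; have K1 : 1 <= K%:R :> Rs by rewrite ler1n.
case: (Hle _ _ (hsim_mulnl hK a0) (hsim_refl b0)); last by rewrite ltNge hba.
case=> _ _ [r1 Hr1] [r2 Hr2].
apply: Hnsim; split; rewrite ?gt_eqF //; [exists r1 | exists (K%:R * r2)].
- apply: le_trans Hr1; rewrite !ger0_norm ?divr_ge0 ?mulr_ge0 //; try lra.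
  by rewrite ler_pM2r ?invr_gt0 //; nra.
- rewrite hyper_mul hyper_nat.
  have -> : b / a = K%:R * (b / (K%:R * a)).
    by field; rewrite !gt_eqF //; lra.
  by rewrite normrM ger0_norm ?ler_pM2l //; lra.
Qed.

Lemma not_cls_lt_affine (a b : Rs) (c : nat) : 1 <= a -> 1 <= b ->
  b <= c%:R * a + c%:R -> ~ cls_lt J a b.
Proof.
move=> ha hb hba; apply: (@not_cls_lt_le_mul _ _ (c + c).+1) => //; try lra.
have hc0 : 0 <= c%:R :> Rs by rewrite ler0n.
by rewrite -addn1 !natrD; nra.
Qed.

End Hyperreals.

(** * Orbit complexity *)

Section OrbitComplexity.
Variables (R : realType) (X : Type) (d : X -> X -> R) (UU : Sigma -> option Sigma)
  (Q : Sigma -> seq Sigma) (I : Sigma -> X) (T : X -> X) (x : X).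

Lemma orbit_cx_spec n eps p : orbit_prog d UU Q I T x n eps p ->
  (exists p, orbit_prog d UU Q I T x n eps p /\ size p = orbit_cx d UU Q I T x n eps) /\
  forall p, orbit_prog d UU Q I T x n eps p -> (orbit_cx d UU Q I T x n eps <= size p)%N.
Proof.
move=> Hp; apply: (xgetPex 0%N (P := fun m =>
  (exists p, orbit_prog d UU Q I T x n eps p /\ size p = m) /\
  forall p, orbit_prog d UU Q I T x n eps p -> (m <= size p)%N)).
have exP : exists m, `[< exists p, orbit_prog d UU Q I T x n eps p /\ size p = m >].
  by exists (size p); apply/asboolP; exists p.
exists (ex_minn exP); case: ex_minnP => m /asboolP Hm Hmin; split=> // q Hq.
by apply: Hmin; apply/asboolP; exists q.
Qed.

Lemma orbit_cx_le n eps p : orbit_prog d UU Q I T x n eps p ->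
  (orbit_cx d UU Q I T x n eps <= size p)%N.
Proof. by move=> Hp; apply: (orbit_cx_spec Hp).2. Qed.

(* Complexity [0] means the empty program works; its output, hence the length
   [n + 1] of the described orbit segment, is unique. *)
Lemma orbit_cx_eq0_uniq n1 n2 e1 e2 p1 p2 :
  orbit_prog d UU Q I T x n1 e1 p1 -> orbit_prog d UU Q I T x n2 e2 p2 ->
  orbit_cx d UU Q I T x n1 e1 = 0%N -> orbit_cx d UU Q I T x n2 e2 = 0%N -> n1 = n2.
Proof.
move=> /orbit_cx_spec [[q1 [[s1 [H1 [S1 _]]] Z1]] _] /orbit_cx_spec [[q2 [[s2 [H2 [S2 _]]] Z2]] _].
move=> E1 E2; move: Z1 Z2; rewrite E1 E2 => /size0nil Z1 /size0nil Z2; subst.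
by move: H1; rewrite H2 => -[E]; subst; move: S1; rewrite S2 => -[].
Qed.

Hypotheses (hUU : universal_machine UU) (hQsurj : forall l, exists s, Q s = l).
Hypothesis hI : interpretation d I.

Lemma orbit_prog_exists n eps : 0 < eps -> exists p, orbit_prog d UU Q I T x n eps p.
Proof.
move=> he; have [g Hg] := choice (fun i => hI (iter i T x) he).
have [s Hs] := hQsurj (mkseq g n.+1).
have [c Hc] := hUU.2 _ (partrec_const s).
have [p [Hp _]] := Hc [::] s erefl.
by exists p, s; split=> //; rewrite Hs size_mkseq; split=> // i hi; rewrite nth_mkseq.
Qed.

Lemma orbit_cx_eps_ge1 (Rs : realFieldType) (J : (nat -> R) -> Rs) eps :
  hyperreal J -> 0 < eps -> 1 <= orbit_cx_eps J d UU Q I T x eps.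
Proof.
move=> hJ he; apply: (hyper_ge1 hJ) => k1 k2.
have [p1 Hp1] := orbit_prog_exists k1 he; have [p2 Hp2] := orbit_prog_exists k2 he.
exact: orbit_cx_eq0_uniq Hp1 Hp2.
Qed.

End OrbitComplexity.

Lemma orbit_prog_image (R : realType) (X Y : Type) (d : X -> X -> R) (d' : Y -> Y -> R)
    (UU : Sigma -> option Sigma) (Q : Sigma -> seq Sigma) (I : Sigma -> X) (Iy : Sigma -> Y)
    (T : X -> X) (T' : Y -> Y) (f : X -> Y) (g h : Sigma -> Sigma) x k (dl e1 e2 : R) p p' :
  is_metric d' -> (forall z, f (T z) = T' (f z)) ->
  (forall s, Q (g s) = map h (Q s)) -> (forall s, d' (f (I s)) (Iy (h s)) < e1) ->
  (forall u v, d u v < dl -> d' (f u) (f v) < e2) ->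
  orbit_prog d UU Q I T x k dl p -> UU p' = omap g (UU p) ->
  orbit_prog d' UU Q Iy T' (f x) k (e1 + e2) p'.
Proof.
move=> hd' hfT hQg hh hf [s [Hs [Hsz Hd]]]; rewrite Hs /= => Hp'.
have f_iter i : f (iter i T x) = iter i T' (f x) by elim: i => //= i <-; rewrite hfT.
exists (g s); split=> //; rewrite hQg size_map; split=> // i hi.
rewrite (nth_map [::]) ?Hsz // -f_iter; move: (hf _ _ (Hd i hi)).
set t := nth [::] (Q s) i => hft.
have := metric_triangle hd' (Iy (h t)) (f (I t)) (f (iter i T x)).
by have := hh t; rewrite [d' (f (I t)) _](metric_sym hd'); lra.
Qed.

Section OrbitComplexityImage.
Variables (R : realType) (UU : Sigma -> option Sigma) (Q : Sigma -> seq Sigma).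
Hypotheses (hUU : universal_machine UU) (hQrec : totrec_seqs Q).
Hypothesis hQsurj : forall l, exists s, Q s = l.
Variables (X Y : Type) (d : X -> X -> R) (d' : Y -> Y -> R).
Variables (I : Sigma -> X) (Iy : Sigma -> Y) (T : X -> X) (T' : Y -> Y) (f : X -> Y).
Hypotheses (hd' : is_metric d') (hI : interpretation d I) (hIy : interpretation d' Iy).
Hypotheses (hf : unif_continuous d d' f) (hfT : forall z, f (T z) = T' (f z)).
Variable D : Sigma -> Sigma -> nat -> rat.
Hypothesis hD : totrec3 D.
Hypothesis hDb : forall s1 s2 n, `|d' (f (I s1)) (Iy s2) - ratr (D s1 s2 n)| <= 2%:R ^- n.

Lemma orbit_cx_image_le x eps : 0 < eps -> exists c, exists2 delta, 0 < delta &
  forall dl k, 0 < dl -> dl < delta ->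
  (orbit_cx d' UU Q Iy T' (f x) k eps <= c * orbit_cx d UU Q I T x k dl + c)%N.
Proof.
move=> he; have he2 : 0 < eps / 2 by lra.
have [delta hdelta hfdelta] := hf he2.
have [h [hh hIh]] := totrec_approx hd' hIy hD hDb he2.
have [g [hg hQg]] := totrec_map_seqs hQrec hQsurj hh.
have [c hc] := hUU.2 _ (partrec_omap hUU.1 hg).
exists c, delta => // dl k hdl hdl_delta.
have [p Hp] := orbit_prog_exists T x hUU hQsurj hI k hdl.
have [[{}p [{}Hp <-]] _] := orbit_cx_spec Hp.
have [s [Hs _]] := Hp.
have [|p' [Hp' Hsize]] := hc p (g s); first by rewrite Hs.
apply: leq_trans Hsize; apply: orbit_cx_le; rewrite [eps]splitr.
apply: orbit_prog_image hd' hfT hQg hIh _ Hp _; last by rewrite Hp' Hs.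
by move=> u v /lt_trans /(_ hdl_delta) /hfdelta.
Qed.

End OrbitComplexityImage.

Lemma comp_structure_interpretation (R : realType) (X : Type) (d : X -> X -> R)
    (CI : (Sigma -> X) -> Prop) I :
  comp_structure d CI -> CI I -> interpretation d I.
Proof. by case=> _ hci _ _ /hci []. Qed.

Lemma inv_succ_lt (R : realType) (e : R) : 0 < e ->
  exists N, forall n, (N <= n)%N -> (n.+1%:R)^-1 < e.
Proof.
move=> he; exists (Num.Def.archi_bound e^-1) => n hn.
rewrite -[e]invrK ltf_pV2 ?posrE ?invr_gt0 ?ltr0n //.
apply: lt_le_trans (archi_boundP _) _; last by rewrite ler_nat leqW.
by rewrite invr_ge0 ltW.
Qed.

Theorem mainTheorem8
  (R : realType)
  (UU : Sigma -> option Sigma) (hUU : universal_machine UU)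
  (Q : Sigma -> seq Sigma) (hQrec : totrec_seqs Q) (hQsurj : forall l, exists s, Q s = l)
  (Rs : realFieldType) (J : (nat -> R) -> Rs) (hJ : hyperreal J)
  (X Y : Type) (d : X -> X -> R) (d' : Y -> Y -> R)
  (hd : is_metric d) (hd' : is_metric d') (hsX : separable d) (hsY : separable d')
  (CI : (Sigma -> X) -> Prop) (CJ : (Sigma -> Y) -> Prop)
  (hCI : comp_structure d CI) (hCJ : comp_structure d' CJ)
  (T : X -> X) (T' : Y -> Y)
  (hT : metric_continuous d T) (hT' : metric_continuous d' T')
  (f : X -> Y) (hfsurj : forall y, exists x, f x = y)
  (hfmor : morphism d d' CI CJ f)
  (hfcomm : forall x, f (T x) = T' (f x)) :
  forall (x : X) (I : Sigma -> X) (IJ : Sigma -> Y),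
    CI I -> CJ IJ ->
    rseq_ge J (orbit_cx_seq J d UU Q I T x) (orbit_cx_seq J d' UU Q IJ T' (f x)).
Proof.
move=> x I Iy HI HIy.
have hI := comp_structure_interpretation hCI HI.
have hIy := comp_structure_interpretation hCJ HIy.
have [hf /(_ I Iy HI HIy) [D [hD hDb]]] := hfmor.
case: (pselect (rseq_lt J (orbit_cx_seq J d' UU Q Iy T' (f x))
    (orbit_cx_seq J d UU Q I T x))) => [|not_gt]; [by left | right; split=> // -[M HM]].
have hm : 0 < (M.+2%:R)^-1 :> R by rewrite invr_gt0 ltr0n.
have [c [delta hdelta hbound]] :=
  orbit_cx_image_le hUU hQrec hQsurj hd' hI hIy hf hfcomm hD hDb x hm.
have [N hN] := inv_succ_lt hdelta.
have hn : (N <= maxn M.+1 N)%N by rewrite leq_maxr.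
apply: (not_cls_lt_affine hJ (c := c) _ _ _ (HM (maxn M.+1 N) M.+1 _ _)).
- by apply: orbit_cx_eps_ge1; rewrite ?invr_gt0 ?ltr0n.
- exact: orbit_cx_eps_ge1.
- rewrite /orbit_cx_seq /orbit_cx_eps; apply: (hyper_affine_le hJ) => k.
  by apply: hbound (hN _ hn); rewrite invr_gt0 ltr0n.
- by rewrite leq_maxl.
- by [].
Qed.
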